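(* Let $\mathcal{B}$ be a prime Banach algebra over $\mathbb{R}$ or $\mathbb{C}$, and let $\mathcal{H}_1,\mathcal{H}_2$ be non-empty open subsets of $\mathcal{B}$. Suppose $\mathcal{B}$ admits a continuous generalized derivation $F$ associated with a derivation $d$ that is not injective, such that for every $(x,y)\in\mathcal{H}_1\times\mathcal{H}_2$ there exist positive integers $p=p(x,y)$, $q=q(x,y)$ with $$F(x^{p}\circ y^{q})+[x^{p},y^{q}]\in Z(\mathcal{B}).$$ Then $\mathcal{B}$ is commutative or $d(Z(\mathcal{B}))=\{0\}$.
   Context: $Z(\mathcal{B})$ denotes the center of $\mathcal{B}$. For $x,y\in\mathcal{B}$, $x\circ y=xy+yx$ and $[x,y]=xy-yx$. $\mathcal{B}$ is prime if $x\mathcal{B}y=\{0\}$ implies $x=0$ or $y=0$. A derivation is an additive map $d:\mathcal{B}\to\mathcal{B}$ with $d(xy)=d(x)y+xd(y)$ for all $x,y$. A generalized derivation associated with the derivation $d$ is an additive map $F:\mathcal{B}\to\mathcal{B}$ with $F(xy)=F(x)y+xd(y)$ for all $x,y\in\mathcal{B}$. *)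

From HB Require Import structures.
From mathcomp Require Import all_boot all_order all_algebra.
From mathcomp Require Import all_classical all_reals all_analysis.
From mathcomp Require Import complex.
Set Implicit Arguments. Unset Strict Implicit. Unset Printing Implicit Defensive.
Import Order.TTheory GRing.Theory Num.Theory.
Import numFieldNormedType.Exports.
Local Open Scope ring_scope.
Local Open Scope classical_set_scope.

Definition scalar_field (R : realType) (b : bool) : numFieldType :=
  if b then (R : numFieldType) else (R[i] : numFieldType).

Section BanachAlg.
Variables (K : numFieldType) (B : normedModType K) (mul : B -> B -> B).

Definition banach_algebra_mul : Prop :=
  (forall x y z, mul x (mul y z) = mul (mul x y) z) /\
      (forall x y z, mul (x + y) z = mul x z + mul y z) /\
      (forall x y z, mul x (y + z) = mul x y + mul x z) /\
      (forall (k : K) x y, mul (k *: x) y = k *: mul x y) /\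
      (forall (k : K) x y, mul x (k *: y) = k *: mul x y) /\
      (forall x y, `|mul x y| <= `|x| * `|y|).

Definition centerB : set B := [set z | forall x, mul z x = mul x z].

Definition jordan (x y : B) : B := mul x y + mul y x.
Definition lie (x y : B) : B := mul x y - mul y x.

Definition primeB : Prop :=
  forall x y, (forall b, mul x (mul b y) = 0) -> x = 0 \/ y = 0.

Definition additive_map (f : B -> B) : Prop := forall x y, f (x + y) = f x + f y.

Definition derivation (d : B -> B) : Prop :=
  additive_map d /\ forall x y, d (mul x y) = mul (d x) y + mul x (d y).

Definition gen_derivation (F d : B -> B) : Prop :=
  additive_map F /\ forall x y, F (mul x y) = mul (F x) y + mul x (d y).

(* x ^ p for p >= 1 (the algebra need not be unital); the value at p = 0 is
   irrelevant and never used *)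
Definition powB (x : B) (p : nat) : B := iter p.-1 (mul x) x.

Definition commutativeB : Prop := forall x y, mul x y = mul y x.
End BanachAlg.

(* Suppose some central z has d z <> 0.  Continuity makes the additive map F
   real-linear, and open sets contain short segments, so x and y may be moved
   along lines x + t z, y + t z, y + t (y z) for all t in a small interval; a
   pigeonhole argument over the countably many exponent pairs fixes p, q for
   infinitely many t.  Expanding the powers gives polynomials in t that lie in
   the centre, a linear subspace, at infinitely many points, so their
   coefficients are central.  Comparing coefficients shows in turn that
   F(z^p y^q), F(z^m y) and finally (z^m d z) y are central for y in H2, using
   F(u z) = F(u) z + u d z.  In a prime algebra the central element z^m d z is
   a non-zero-divisor, so H2 lies in the centre; as H2 is open and nonempty,
   the centre is everything. *)

From HB Require Import structures.
From mathcomp Require Import all_boot all_order all_algebra.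
From mathcomp Require Import all_classical all_reals all_analysis.
From mathcomp Require Import complex.
Import Order.TTheory GRing.Theory Num.Theory.
Import numFieldNormedType.Exports.
Local Open Scope ring_scope.
Local Open Scope classical_set_scope.
Set Implicit Arguments. Unset Strict Implicit. Unset Printing Implicit Defensive.

Section Subspace.
Variables (K : fieldType) (V : lmodType K).

Definition subspace (S : set V) : Prop :=
  [/\ S 0, forall u v, S u -> S v -> S (u + v) & forall k u, S u -> S (k *: u)].

Variables (S : set V) (Ssub : subspace S).

Lemma subspace0 : S 0. Proof. by case: Ssub. Qed.

Lemma subspaceD u v : S u -> S v -> S (u + v). Proof. by case: Ssub => _ SD _; apply: SD. Qed.

Lemma subspaceZ k u : S u -> S (k *: u). Proof. by case: Ssub => _ _; apply. Qed.

Lemma subspaceB u v : S u -> S v -> S (u - v).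
Proof. by move=> Su Sv; rewrite -scaleN1r; apply/subspaceD/subspaceZ. Qed.

Lemma subspaceZV k u : k != 0 -> S (k *: u) -> S u.
Proof. by move=> k0 /(subspaceZ k^-1); rewrite scalerA mulVf // scale1r. Qed.

End Subspace.

Section PolynomialFunctions.
Variables (R K : fieldType) (io : {rmorphism R -> K}) (V : lmodType K).

(* [polyfun n f]: f s is a polynomial in [io s] with coefficients in V and
   fewer than n terms (degree < n, following MathComp's [size]). *)
Fixpoint polyfun (n : nat) (f : R -> V) : Prop :=
  if n is n'.+1 then exists a g, polyfun n' g /\ forall s, f s = a + io s *: g s
  else forall s, f s = 0.

Lemma polyfun0 n : polyfun n (fun _ => 0).
Proof.
elim: n => [|n IH] //=; exists 0, (fun _ => 0).
by split => // s; rewrite scaler0 addr0.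
Qed.

Lemma polyfun_cst n a : polyfun n.+1 (fun _ => a).
Proof.
by exists a, (fun _ => 0); split; [exact: polyfun0 | move=> s; rewrite scaler0 addr0].
Qed.

Lemma polyfunS n f : polyfun n f -> polyfun n.+1 f.
Proof.
elim: n f => [|n IH] f /=.
  by move=> f0; exists 0, (fun _ => 0); split => // s; rewrite f0 scaler0 addr0.
by move=> [a [g [pg fE]]]; exists a, g; split => //; apply: IH.
Qed.

Lemma polyfun_le m n f : (m <= n)%N -> polyfun m f -> polyfun n f.
Proof.
move=> /subnK <-; elim: (n - m)%N => [|k IH] //= pf.
by apply: polyfunS; apply: IH.
Qed.

Lemma polyfun_morph n (L : V -> V) :
  {morph L : x y / x + y} -> (forall s x, L (io s *: x) = io s *: L x) ->
  forall f, polyfun n f -> polyfun n (fun s => L (f s)).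
Proof.
move=> LD LZ; elim: n => [|n IH] f /=.
  have L0 : L 0 = 0 by apply: (addIr (L 0)); rewrite -LD !add0r.
  by move=> f0 s; rewrite f0.
move=> [a [g [pg fE]]]; exists (L a), (fun s => L (g s)); split; first exact: IH.
by move=> s; rewrite fE LD LZ.
Qed.

Lemma polyfunD n f g : polyfun n f -> polyfun n g -> polyfun n (fun s => f s + g s).
Proof.
elim: n f g => [|n IH] f g /=.
  by move=> f0 g0 s; rewrite f0 g0 addr0.
move=> [a [f' [pf' fE]]] [b [g' [pg' gE]]].
exists (a + b), (fun s => f' s + g' s); split; first exact: IH.
by move=> s; rewrite fE gE scalerDr addrACA.
Qed.

Lemma polyfunZ n (k : K) f : polyfun n f -> polyfun n (fun s => k *: f s).
Proof.
by apply: polyfun_morph => [x y|s x]; rewrite ?scalerDr // !scalerA mulrC.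
Qed.

Lemma polyfunX n f : polyfun n f -> polyfun n.+1 (fun s => io s *: f s).
Proof. by move=> pf; exists 0, f; split => // s; rewrite add0r. Qed.

Lemma polyfunXn n k f : polyfun n f -> polyfun (n + k) (fun s => io s ^+ k *: f s).
Proof.
move=> pf; elim: k => [|k IH].
  by rewrite addn0; under eq_fun do rewrite expr0 scale1r.
by rewrite addnS; under eq_fun do rewrite exprS -scalerA; apply: polyfunX.
Qed.

Lemma polyfun_factor n f s0 : polyfun n.+1 f ->
  exists h, polyfun n h /\ forall s, f s - f s0 = (io s - io s0) *: h s.
Proof.
elim: n f => [|n IH] f [a [g [pg fE]]].
  by exists (fun _ => 0); split => // s; rewrite !fE !pg !scaler0 subrr.
have [h [ph gE]] := IH g pg.
exists (fun s => g s + io s0 *: h s); split.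
  by apply: polyfunD; [|apply: polyfunS; apply: polyfunZ].
move=> s; rewrite !fE opprD addrACA subrr add0r scalerDr scalerA mulrC -scalerA -gE.
by rewrite scalerBl scalerBr addrA subrK.
Qed.

Lemma polyfun_line (a b : V) : polyfun 2 (fun s => a + io s *: b).
Proof. by exists a, (fun _ => b); split => //; exact: polyfun_cst. Qed.

Lemma io_subr_neq0 s t : s != t -> io s - io t != 0.
Proof. by rewrite subr_eq0; apply: contra => /eqP /fmorph_inj ->. Qed.

Variables (S : set V) (Ssub : subspace S).

Lemma polyfun_subspace n f (T : set R) : polyfun n f -> infinite_set T ->
  (forall s, T s -> S (f s)) -> forall s, S (f s).
Proof.
elim: n f T => [|n IH] f T pf Tinf ST.
  by move=> s; rewrite pf; exact: subspace0.
have [s0 Ts0] := infinite_setN0 Tinf.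
have [h [ph fE]] := polyfun_factor s0 pf.
have Sh : forall s, S (h s).
  apply: (IH h (T `\ s0) ph); first by apply: infinite_setD => //; exact: finite_set1.
  move=> s [Ts /eqP ss0]; apply: (subspaceZV Ssub (io_subr_neq0 ss0)).
  by rewrite -fE; apply: subspaceB => //; apply: ST.
move=> s; rewrite -(subrK (f s0) (f s)) fE.
by apply: subspaceD => //; [apply: subspaceZ | apply: ST].
Qed.

(* Divide out [io s] once per step; the constant term, the value at 0, is in S
   because the whole polynomial is. *)
Lemma polyfun_subspace_high n m g r (T : set R) : polyfun m g -> polyfun n r ->
  infinite_set T -> (forall s, T s -> S (io s ^+ n *: g s + r s)) ->
  forall s, S (g s).
Proof.
elim: n r T => [|n IH] r T pg pr Tinf ST.
  apply: (polyfun_subspace pg Tinf) => s /ST.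
  by rewrite pr expr0 scale1r addr0.
move: pr => [c [r' [pr' rE]]].
have Sall : forall s, S (io s ^+ n.+1 *: g s + r s).
  apply: (polyfun_subspace (n := m + n.+1) _ Tinf ST).
  apply: polyfunD; first exact: polyfunXn.
  by apply: (polyfun_le (leq_addl m n.+1)); exists c, r'.
have Sc : S c by have := Sall 0; rewrite rE rmorph0 exprS mul0r !scale0r add0r addr0.
apply: (IH r' (T `\ 0) pg pr'); first by apply: infinite_setD => //; exact: finite_set1.
move=> s [_ /eqP s0]; apply: (subspaceZV Ssub (_ : io s != 0)); first by rewrite fmorph_eq0.
have := subspaceB Ssub (Sall s) Sc.
by rewrite rE addrCA addrAC subrr add0r scalerDr scalerA -exprS.
Qed.

End PolynomialFunctions.

Lemma itvoo_infinite_fiber (R : realType) (T : countType) (P : T -> R -> Prop) (a b : R) :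
  a < b -> (forall s, a < s < b -> exists t, P t s) ->
  exists t, infinite_set [set s | a < s < b /\ P t s].
Proof.
move=> ab cover; apply/not_existsP => fin.
have sub : [set s : R | a < s < b] `<=` \bigcup_(t in [set: T]) [set s | a < s < b /\ P t s].
  by move=> s /= abs; have [t Pt] := cover s abs; exists t.
have : countable [set s : R | a < s < b].
  apply: sub_countable (subset_card_le sub) _; apply: bigcup_countable => [|t _].
    exact: countableP.
  by apply: finite_set_countable; apply: contrapT; apply: fin.
move/countable_lebesgue_measure0; rewrite -set_itvoo lebesgue_measure_itv /= lte_fin ab.
by move=> /eqP; rewrite -EFinB eqe subr_eq0 gt_eqF.
Qed.

Section Radial.
Variables (R : numFieldType) (K : fieldType) (io : {rmorphism R -> K}) (V : lmodType K).

Definition radial (H : set V) : Prop :=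
  forall y w, H y -> exists e : R, 0 < e /\ forall s, 0 < s < e -> H (y + io s *: w).

Lemma subspace_radial_full (S H : set V) : subspace S -> radial H -> H !=set0 ->
  H `<=` S -> forall w, S w.
Proof.
move=> Ssub Hr [y Hy] HS w; have [e [e0 He]] := Hr y w Hy.
have e20 : 0 < e / 2 by rewrite divr_gt0.
have He2 : 0 < e / 2 < e by rewrite e20 ltr_pdivrMr // ltr_pMr // ltr1n.
apply: (@subspaceZV _ _ _ Ssub (io (e / 2))); first by rewrite fmorph_eq0 gt_eqF.
rewrite -(addKr y (io (e / 2) *: w)) addrC.
by apply: (subspaceB Ssub); apply: HS => //; apply: He.
Qed.

End Radial.

Section PrimeAlgebra.
Variables (K : numFieldType) (B : normedModType K) (mul : B -> B -> B).
Hypotheses (mulA : forall x y z, mul x (mul y z) = mul (mul x y) z)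
  (mulDl : forall x y z, mul (x + y) z = mul x z + mul y z)
  (mulDr : forall x y z, mul x (y + z) = mul x y + mul x z)
  (mulZl : forall (k : K) x y, mul (k *: x) y = k *: mul x y)
  (mulZr : forall (k : K) x y, mul x (k *: y) = k *: mul x y).

Local Notation center := (centerB mul).
Local Notation pow := (powB mul).

Let mul0l x : mul 0 x = 0.
Proof. by rewrite -(scale0r 0) mulZl !scale0r. Qed.

Let mul0r x : mul x 0 = 0.
Proof. by rewrite -(scale0r 0) mulZr !scale0r. Qed.

Let mulBr x y z : mul x (y - z) = mul x y - mul x z.
Proof. by rewrite mulDr -scaleN1r mulZr scaleN1r. Qed.

Lemma center_subspace : subspace center.
Proof.
split=> [x|u v uc vc x|k u uc x]; first by rewrite mul0l mul0r.
  by rewrite mulDl mulDr uc vc.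
by rewrite mulZl mulZr uc.
Qed.

Lemma centerM u v : center u -> center v -> center (mul u v).
Proof. by move=> uc vc x; rewrite -mulA vc mulA uc -mulA. Qed.

Lemma center_pow z p : center z -> center (pow z p).
Proof. by move=> zc; rewrite /powB; elim: p.-1 => [|n IH] //=; apply: centerM. Qed.

Lemma powS x p : (0 < p)%N -> pow x p.+1 = mul x (pow x p).
Proof. by case: p. Qed.

Lemma mul_pow_iter z y p n : center z -> (0 < p)%N ->
  mul (pow z p) (iter n (mul z) y) = mul (pow z (p + n)) y.
Proof.
move=> zc p0; elim: n => [|n IH] /=; first by rewrite addn0.
by rewrite mulA (center_pow p zc) -mulA IH mulA -powS ?addnS // addn_gt0 p0.
Qed.

Lemma prime_center_mul_eq0 u w : primeB mul -> center u ->
  mul u w = 0 -> u = 0 \/ w = 0.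
Proof. by move=> Bprime uc uw0; apply: Bprime => b; rewrite mulA uc -mulA uw0 mul0r. Qed.

Lemma center_pow_neq0 z p : primeB mul -> center z -> z != 0 -> pow z p != 0.
Proof.
move=> Bprime zc z0; rewrite /powB; elim: p.-1 => [|n IH] //=.
by apply/eqP => /(prime_center_mul_eq0 Bprime zc) [] /eqP; apply/negP.
Qed.

Lemma derivation_center d z : derivation mul d -> center z -> center (d z).
Proof.
move=> [_ dM] zc x; apply: (addIr (mul z (d x))).
by rewrite -dM zc dM addrC (zc (d x)).
Qed.

Section Expansion.
Variables (R : fieldType) (io : {rmorphism R -> K}).

Let polyfun_mull n x f : polyfun io n f -> polyfun io n (fun s => mul x (f s)).
Proof. by apply: polyfun_morph => [u v|s u]; rewrite ?mulDr ?mulZr. Qed.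

Lemma pow_line_lead x z p : (0 < p)%N -> exists r, polyfun io p r /\
  forall s, pow (x + io s *: z) p = io s ^+ p *: pow z p + r s.
Proof.
case: p => // p _; elim: p => [|p [r [pr rE]]].
  by exists (fun _ => x); split => [|s]; [exact: polyfun_cst | rewrite expr1 addrC].
exists (fun s => io s ^+ p.+1 *: mul x (pow z p.+1) + (mul x (r s) + io s *: mul z (r s))).
split=> [|s].
  apply: polyfunD; first by apply: (polyfunXn (n := 1)); apply: polyfun_cst.
  by apply: polyfunD; [apply: polyfunS | apply: polyfunX]; apply: polyfun_mull.
rewrite powS // rE mulDl !mulDr !mulZl !mulZr scalerA -exprS -powS //.
by rewrite addrCA -addrA.
Qed.

(* [iter n (mul z) y] stands for z^n y, meaningful also for n = 0 since B need
   not be unital. *)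
Lemma pow_line_center y z n : center z -> exists r, polyfun io n r /\
  forall s, pow (y + io s *: z) n.+1 =
    io s ^+ n *: (n.+1%:R *: iter n (mul z) y + io s *: pow z n.+1) + r s.
Proof.
move=> zc; elim: n => [|n [r [pr rE]]].
  by exists (fun _ => 0); split => // s; rewrite expr0 !scale1r addr0.
exists (fun s => io s ^+ n *: (n.+1%:R *: mul y (iter n (mul z) y)) +
          (mul y (r s) + io s *: mul z (r s))); split=> [|s].
  apply: polyfunD; first by apply: (polyfunXn (n := 1)); apply: polyfun_cst.
  by apply: polyfunD; [apply: polyfunS | apply: polyfunX]; apply: polyfun_mull.
have yzn : mul y (pow z n.+1) = iter n.+1 (mul z) y.
  by elim: n {pr rE} => [|n IH]; [exact: esym (zc y) | rewrite powS // mulA -(zc y) -mulA IH].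
rewrite powS // rE mulDl !mulDr !mulZl !mulZr !mulDr !mulZr yzn -powS //.
rewrite -[n.+2]addn1 natrD scalerDl scale1r !scalerDr !scalerA -!exprS -exprSr.
by rewrite !addrA [LHS](ACl (4*2*5*1*3*6)).
Qed.

End Expansion.

Section NonzeroDerivationOnCenter.
Variables (R : realType) (io : {rmorphism R -> K}) (F d : B -> B) (H1 H2 : set B) (z : B).
Hypotheses (FD : additive_map F) (Fio : forall s w, F (io s *: w) = io s *: F w)
  (H1r : radial io H1) (H1n : H1 !=set0) (H2r : radial io H2) (zc : center z).
Hypothesis FE : forall x y, H1 x -> H2 y -> exists p q : nat, (0 < p)%N /\ (0 < q)%N /\
  center (F (jordan mul (pow x p) (pow y q)) + lie mul (pow x p) (pow y q)).

Let FioX s k w : F (io s ^+ k *: w) = io s ^+ k *: F w.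
Proof. by rewrite -rmorphXn Fio. Qed.

Lemma center_F_mul_pow_pow y : H2 y -> exists p q, (0 < p)%N /\ (0 < q)%N /\
  center (F (mul (pow z p) (pow y q))).
Proof.
move=> H2y; have [x H1x] := H1n; have [e [e0 He]] := H1r z H1x.
pose E u v := F (jordan mul u v) + lie mul u v.
have [[p q] Tinf] : exists pq : nat * nat, infinite_set [set s | 0 < s < e /\
    [/\ (0 < pq.1)%N, (0 < pq.2)%N & center (E (pow (x + io s *: z) pq.1) (pow y pq.2))]].
  apply: itvoo_infinite_fiber e0 _ => s /He /FE /(_ H2y) [p [q [p0 [q0 Ec]]]].
  by exists (p, q).
have [s1 [_ [/= p0 q0 _]]] := infinite_setN0 Tinf.
exists p, q; split=> //; split=> //.
pose L u := E u (pow y q).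
have LD : {morph L : u v / u + v}.
  move=> u v; rewrite /L /E /jordan /lie !mulDl !mulDr opprD.
  by rewrite [X in F X]addrACA [in LHS]FD [X in _ + X = _]addrACA [LHS]addrACA.
have LZ t k u : L (io t ^+ k *: u) = io t ^+ k *: L u.
  by rewrite /L /E /jordan /lie !mulZl !mulZr -scalerDr FioX -scalerBr -scalerDr.
have [r [pr rE]] := pow_line_lead io x z p0.
have Lr : polyfun io p (fun t => L (r t)).
  by apply: polyfun_morph pr => // t u; have := LZ t 1 u; rewrite expr1.
suff : center (L (pow z p)).
  rewrite /L /E /jordan /lie -(center_pow p zc) subrr addr0 FD -mulr2n -scaler_nat.
  by apply: (subspaceZV center_subspace); rewrite pnatr_eq0.
apply: (polyfun_subspace_high center_subspace (polyfun_cst io 0 _) Lr Tinf _ 0).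
by move=> t [_ [_ _]]; rewrite /= -/(L _) rE LD LZ.
Qed.

Lemma center_F_mul_pow y : H2 y -> exists m, (0 < m)%N /\ center (F (mul (pow z m) y)).
Proof.
move=> H2y; have [e [e0 He]] := H2r z H2y.
have [[p q] Tinf] : exists pq : nat * nat, infinite_set [set s | 0 < s < e /\
    [/\ (0 < pq.1)%N, (0 < pq.2)%N & center (F (mul (pow z pq.1) (pow (y + io s *: z) pq.2)))]].
  apply: itvoo_infinite_fiber e0 _ => s /He /center_F_mul_pow_pow [p [q [p0 [q0 Ec]]]].
  by exists (p, q).
have [s1 [_ [/= p0 q0 _]]] := infinite_setN0 Tinf.
case: q q0 Tinf => // n _ Tinf.
exists (p + n)%N; split; first by rewrite addn_gt0 p0.
pose L u := F (mul (pow z p) u).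
have LD : {morph L : u v / u + v} by move=> u v; rewrite /L mulDr FD.
have LZ t k u : L (io t ^+ k *: u) = io t ^+ k *: L u by rewrite /L mulZr FioX.
have LZ1 t u : L (io t *: u) = io t *: L u by have := LZ t 1 u; rewrite expr1.
have [r [pr rE]] := pow_line_center io y n zc.
have Lr : polyfun io n (fun t => L (r t)) by apply: polyfun_morph pr.
have Lline : polyfun io 2 (fun t => L (n.+1%:R *: iter n (mul z) y + io t *: pow z n.+1)).
  by apply: polyfun_morph (polyfun_line _ _ _).
suff : center (L (n.+1%:R *: iter n (mul z) y + io 0 *: pow z n.+1)).
  rewrite rmorph0 scale0r addr0 -(rmorph_nat io) LZ1 /L mul_pow_iter //.
  by apply: (subspaceZV center_subspace); rewrite rmorph_nat pnatr_eq0.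
apply: (polyfun_subspace_high center_subspace Lline Lr Tinf _ 0).
by move=> t [_ [_ _]]; rewrite /= -/(L _) rE LD LZ.
Qed.

Hypotheses (Bprime : primeB mul) (dder : derivation mul d)
  (Fmul : forall x y, F (mul x y) = mul (F x) y + mul x (d y)) (dz : d z != 0).

Lemma radial_sub_center : H2 `<=` center.
Proof.
move=> y H2y; have [e [e0 He]] := H2r (mul y z) H2y.
have [m Tinf] : exists m, infinite_set [set s | 0 < s < e /\
    (0 < m)%N /\ center (F (mul (pow z m) (y + io s *: mul y z)))].
  by apply: itvoo_infinite_fiber e0 _ => s /He /center_F_mul_pow.
pose G u := F (mul (pow z m) u).
have GD : {morph G : u v / u + v} by move=> u v; rewrite /G mulDr FD.
have GZ t u : G (io t *: u) = io t *: G u by rewrite /G mulZr Fio.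
have Gline : polyfun io 2 (fun t => G (y + io t *: mul y z)).
  by apply: polyfun_morph (polyfun_line _ _ _).
have Gc : forall t, center (G (y + io t *: mul y z)).
  by apply: (polyfun_subspace center_subspace Gline Tinf) => t [_ []].
have Gy : center (G y) by have := Gc 0; rewrite rmorph0 scale0r addr0.
have Gyz : center (G (mul y z)).
  by have := subspaceB center_subspace (Gc 1) Gy; rewrite GD GZ rmorph1 scale1r addrC addKr.
set c := d z; set e' := mul (pow z m) c.
have zmc : center (pow z m) := center_pow m zc.
have cc : center c := derivation_center dder zc.
have ec : center e' := centerM zmc cc.
have e'0 : e' != 0.
  have z0 : z != 0.
    apply: contraNneq dz => ->; apply/eqP/(addIr (d 0)).
    by rewrite -(proj1 dder) !add0r.
  apply/eqP => /(prime_center_mul_eq0 Bprime zmc) [].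
    by apply/eqP; apply: center_pow_neq0.
  exact/eqP.
have ey : center (mul e' y).
  have GE : G (mul y z) = mul (G y) z + mul e' y.
    by rewrite /G mulA Fmul -[mul (mul _ y) _]mulA -(cc y) mulA.
  by have := subspaceB center_subspace Gyz (centerM Gy zc); rewrite GE addrC addKr.
move=> x; apply/eqP; rewrite -subr_eq0; apply/eqP.
have : mul e' (mul y x - mul x y) = 0 by rewrite mulBr !mulA (ey x) (ec x) mulA subrr.
by case/(prime_center_mul_eq0 Bprime ec) => // /eqP; rewrite (negPf e'0).
Qed.

End NonzeroDerivationOnCenter.
End PrimeAlgebra.

Lemma additive_ratrZ (K : numFieldType) (V W : lmodType K) (F : V -> W) :
  {morph F : x y / x + y} -> forall q x, F (ratr q *: x) = ratr q *: F x.
Proof.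
move=> FD q x.
have FB : zmod_morphism F.
  by move=> u v; apply: (addIr (F v)); rewrite -FD !subrK.
pose Fa : {additive V -> W} := HB.pack F (GRing.isZmodMorphism.Build V W F FB).
rewrite -[F]/(Fa : _ -> _).
have dq : (denq q)%:~R != 0 :> K by rewrite intr_eq0 denq_neq0.
have numq_ratr : (denq q)%:~R * ratr q = (numq q)%:~R :> K by rewrite mulrC divfK.
apply: (scalerI dq); rewrite scalerA numq_ratr scaler_int -raddfMz -scaler_int.
by rewrite scalerA numq_ratr !scaler_int raddfMz.
Qed.

Section ContinuousEmbedding.
Variables (R : realType) (K : numFieldType) (io : {rmorphism R -> K}).
Hypothesis io_cont : continuous io.

Lemma continuous_additive_scale (V W : normedModType K) (F : V -> W) :
  {morph F : x y / x + y} -> continuous F ->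
  forall s w, F (io s *: w) = io s *: F w.
Proof.
move=> FD Fc s w; apply/eqP; rewrite -subr_eq0; apply/negPn/negP => Fs.
(* [phi] is continuous and vanishes on the dense set of rationals. *)
pose phi t := F (io t *: w) - io t *: F w.
have phi_cont : continuous phi.
  move=> t; apply: cvgB.
    apply: (continuous_comp (f := fun t => io t *: w)) (Fc _).
    by apply: cvgZr_tmp; apply: io_cont.
  by apply: cvgZr_tmp; apply: io_cont.
have : \forall t \near s, phi t != 0.
  have Fs0 : 0 < `|phi s| by rewrite normr_gt0.
  have /cvgrPdist_lt /(_ _ Fs0) := phi_cont s.
  by apply: filterS => t; apply: contraTneq => ->; rewrite subr0 ltxx.
move=> /nbhs_ballP [e e0 He].
have [t [/He phit [q _ qt]]] := dense_rat (ex_intro _ s (ballxx s e0)) (ball_open s e).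
by move: phit; rewrite -qt /phi fmorph_rat additive_ratrZ // subrr eqxx.
Qed.

Lemma open_radial (V : normedModType K) (H : set V) : open H -> radial io H.
Proof.
move=> Hopen y w Hy.
have : \forall s \near 0, H (y + io s *: w).
  have lin_cont : {for 0, continuous (fun s => y + io s *: w)}.
    apply: continuousD; first exact: cvg_cst.
    by apply: cvgZr_tmp; apply: io_cont.
  apply: lin_cont; rewrite /= rmorph0 scale0r addr0.
  exact: open_nbhs_nbhs.
move/nbhs_normP => [e e0 He]; exists e; split=> // s /andP[s0 se]; apply: He.
by rewrite /= sub0r normrN gtr0_norm.
Qed.
End ContinuousEmbedding.

Lemma scalar_field_embedding (R : realType) (b : bool) :
  exists io : {rmorphism R -> scalar_field R b}, continuous io.
Proof.
case: b => /=.
  by exists idfun => s; apply/cvgrPdist_lt => e e0 /=; exists e.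
exists (real_complex R) => s; apply/cvgrPdist_lt => e; rewrite ltcE /= => /andP[/eqP e0 e1].
exists (complex.Re e) => // t /=.
rewrite -rmorphB normc_def /= expr0n /= addr0 sqrtr_sqr.
have -> : e = real_complex R (complex.Re e) by case: e e0 {e1} => ? ? /= ->.
by rewrite ltcR.
Qed.

Theorem theorem3p2 (R : realType) (b : bool)
    (B : completeNormedModType (scalar_field R b)) (mul : B -> B -> B)
    (H1 H2 : set B) (F d : B -> B) :
  banach_algebra_mul mul ->
  primeB mul ->
  open H1 -> H1 !=set0 -> open H2 -> H2 !=set0 ->
  derivation mul d -> gen_derivation mul F d ->
  continuous F ->
  ~ injective d ->
  (forall x y, H1 x -> H2 y ->
     exists p q : nat, (0 < p)%N /\ (0 < q)%N /\
       centerB mul (F (jordan mul (powB mul x p) (powB mul y q))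
                    + lie mul (powB mul x p) (powB mul y q))) ->
  commutativeB mul \/ (forall z, centerB mul z -> d z = 0).
Proof.
move=> [mulA [mulDl [mulDr [mulZl [mulZr _]]]]] Bprime H1open H1n H2open H2n dder
  [FD Fmul] Fc _ FE.
have [|] := pselect (forall z, centerB mul z -> d z = 0); first by right.
move=> /existsNP [z /not_implyP [zc /eqP dz]]; left.
have [io io_cont] := scalar_field_embedding R b.
have Fio := continuous_additive_scale io_cont FD Fc.
have H2r := open_radial io_cont H2open.
have Bc : forall w, centerB mul w.
  apply: (subspace_radial_full (center_subspace mulDl mulDr mulZl mulZr) H2r H2n).
  exact: (radial_sub_center mulA mulDl mulDr mulZl mulZr FD Fio
    (open_radial io_cont H1open) H1n H2r zc FE Bprime dder Fmul dz).
by move=> x y; apply: Bc.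
Qed.
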